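(* For every $n\ge 1$, the maximum number of flippable faces of a locally valid MV assignment of $M_{2,n}$ is $2n$; it is attained by exactly two locally valid MV assignments, and both are colored blue.
   Context: The $2\times n$ Miura-ori $M_{2,n}$ ($n\ge1$) has faces $\alpha_{i,j}$ ($i\in\{1,2\}$, $j\in\{1,\dots,n\}$), interior vertices $x_1,\dots,x_{n-1}$, and creases $e_0$ and $e_{3k-1},e_{3k},e_{3k+1}$ ($k=1,\dots,n-1$). At $x_k$ the creases are left $e_{3k-3}$, top $e_{3k-1}$, right $e_{3k}$, bottom $e_{3k+1}$. Face $\alpha_{1,j}$ is bordered by those of $e_{3j-4}$ (iff $j\ge2$), $e_{3j-3}$, $e_{3j-1}$ (iff $j\le n-1$); $\alpha_{2,j}$ by those of $e_{3j-2}$ (iff $j\ge2$), $e_{3j-3}$, $e_{3j+1}$ (iff $j\le n-1$). An MV assignment $\mu$ maps creases to $\{1,-1\}$; it is locally valid if for each $k$ exactly one of $\mu(e_{3k-1}),\mu(e_{3k}),\mu(e_{3k+1})$ differs from $\mu(e_{3k-3})$. The face flip $\mu_\alpha$ negates $\mu$ on the creases bordering $\alpha$; $\alpha$ is flippable under $\mu$ if $\mu,\mu_\alpha$ are both locally valid; $f(\mu)$ is the number of flippable faces. For $n\ge2$, the restriction of a locally valid $\mu'$ on $M_{2,n}$ to the creases of $M_{2,n-1}$ (all but $e_{3n-4},e_{3n-3},e_{3n-2}$) is a locally valid $\mu$ on $M_{2,n-1}$, and $\mu'$ is colored blue, orange or magenta according as $f(\mu')-f(\mu)=2,1,0$. Both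 locally valid assignments of $M_{2,1}$ are colored blue. *)

From mathcomp Require Import all_boot all_order all_algebra.
Set Implicit Arguments. Unset Strict Implicit. Unset Printing Implicit Defensive.
Import GRing.Theory Num.Theory.

(* Creases of M_{2,n}: e_0, e_2, e_3, ..., e_{3n-2}  (3n-2 creases). *)
Definition crease (n : nat) := 'I_(3 * n - 2).
Definition lab (n : nat) (c : crease n) : nat := if val c == 0 then 0 else (val c).+1.

(* Faces alpha_{i,j}: (i, j) : 'I_2 * 'I_n stands for alpha_{i+1, j+1}. *)
Definition face (n : nat) := ('I_2 * 'I_n)%type.

Definition assignment (n : nat) := {ffun crease n -> int}.

Definition is_MV (n : nat) (mu : assignment n) : bool :=
  [forall c, (mu c == 1%R) || (mu c == (-1)%R)].

(* Local validity: at each interior vertex x_k (1 <= k <= n-1), exactly one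
   of mu(e_{3k-1}), mu(e_{3k}), mu(e_{3k+1}) differs from mu(e_{3k-3}). *)
Definition locally_valid (n : nat) (mu : assignment n) : bool :=
  [forall k : 'I_n, (0 < k) ==>
     [forall c0 : crease n, (lab c0 == 3 * k - 3) ==>
        (#|[set c : crease n | (lab c \in [:: 3 * k - 1; 3 * k; 3 * k + 1])
                                && (mu c != mu c0)]| == 1)]].

Definition borders (n : nat) (a : face n) (m : nat) : bool :=
  let j := (val a.2).+1 in
  if val a.1 == 0 then
    [|| (2 <= j) && (m == 3 * j - 4), m == 3 * j - 3 | (j <= n - 1) && (m == 3 * j - 1)]
  else
    [|| (2 <= j) && (m == 3 * j - 2), m == 3 * j - 3 | (j <= n - 1) && (m == 3 * j + 1)].

Definition flip (n : nat) (mu : assignment n) (a : face n) : assignment n :=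
  [ffun c => if borders a (lab c) then (- mu c)%R else mu c].

Definition flippable (n : nat) (mu : assignment n) (a : face n) : bool :=
  locally_valid mu && locally_valid (flip mu a).

Definition nflip (n : nat) (mu : assignment n) : nat :=
  #|[set a : face n | flippable mu a]|.

Lemma restr_le (n : nat) : 3 * (n - 1) - 2 <= 3 * n - 2.
Proof. by apply: leq_sub2r; rewrite leq_mul2l leq_subr orbT. Qed.

(* Restriction of an assignment on M_{2,n} to the creases of M_{2,n-1}
   (all but e_{3n-4}, e_{3n-3}, e_{3n-2}); labels are preserved. *)
Definition restrict (n : nat) (mu : assignment n) : assignment (n - 1) :=
  [ffun c : crease (n - 1) => mu (widen_ord (restr_le n) c)].

Definition blue (n : nat) (mu : assignment n) : bool :=
  if n == 1 then true else nflip mu == nflip (restrict mu) + 2.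

(* At the vertex x_k the two faces alpha_{1,k}, alpha_{2,k} to its left negate
   its (left, top) and its (left, bottom) creases.  If mu stays locally valid
   after both flips, x_k is forced to top = left, right = -left, bottom = left;
   so an MV assignment with all 2n faces flippable is mu(e_m) = (-1)^m mu(e_0).
   Conversely, in these two alternating assignments every flip negates two
   creases at each vertex it touches and leaves exactly one differing from the
   left one, so all faces are flippable; and restricting to M_{2,n-1} gives the
   alternating assignment there, with 2(n-1) flippable faces. *)

From mathcomp Require Import all_boot all_order all_algebra zify.
Import GRing.Theory Num.Theory.
Set Implicit Arguments. Unset Strict Implicit. Unset Printing Implicit Defensive.

Lemma card_ord_mem3 m (G : pred nat) a b d : a < b -> b < d -> d < m ->
  #|[set c : 'I_m | (val c \in [:: a; b; d]) && G (val c)]| = G a + G b + G d.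
Proof.
move=> lt_ab lt_bd lt_dm.
rewrite cardsE cardE /enum_mem size_filter -enumT.
rewrite -(count_map val (fun i => (i \in [:: a; b; d]) && G i)) val_enum_ord.
rewrite (eq_count (a2 := predI G (mem [:: a; b; d]))); last by move=> i; rewrite /= andbC.
rewrite -count_filter.
have /permP -> : perm_eq [seq x <- iota 0 m | x \in [:: a; b; d]] [:: a; b; d].
  apply: uniq_perm; first by rewrite filter_uniq // iota_uniq.
    by rewrite /= !inE; apply/and3P; split => //; apply/negP; rewrite ?inE; lia.
  by move=> x; rewrite mem_filter mem_iota !inE; apply/idP/idP; lia.
by rewrite /= addnA addn0.
Qed.

Definition pm1 (x : int) : bool := (x == 1%R) || (x == (-1)%R).

(* Position [p] is the index [p] of [crease n], i.e. the crease with label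
   [label p]; [at_pos] is [0] past the last crease.  Vertex [x_k] has its left,
   top, right and bottom creases at positions [3k-4], [3k-2], [3k-1], [3k];
   for [k = 1] the truncated [3k-4] is [0], the position of [e_0]. *)
Definition at_pos n (mu : assignment n) (p : nat) : int :=
  if insub p is Some c then mu c else 0%R.

Definition label (p : nat) : nat := if p == 0 then 0 else p.+1.

Lemma at_posE n (mu : assignment n) (c : crease n) : at_pos mu c = mu c.
Proof. by rewrite /at_pos valK. Qed.

Lemma at_pos_MV n (mu : assignment n) p : is_MV mu -> p < 3 * n - 2 -> pm1 (at_pos mu p).
Proof.
move=> /forallP mu_MV lt_p; rewrite -[p]/(val (Ordinal lt_p)) at_posE; exact: mu_MV.
Qed.

Lemma at_pos_flip n (mu : assignment n) a p :
  at_pos (flip mu a) p = if borders a (label p) then (- at_pos mu p)%R else at_pos mu p.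
Proof.
rewrite /at_pos; case: insubP => [c _ <- | _]; first by rewrite ffunE.
by rewrite oppr0 if_same.
Qed.

Lemma label_vertex k : 0 < k ->
  [/\ label (3 * k - 4) = 3 * k - 3, label (3 * k - 2) = 3 * k - 1,
      label (3 * k - 1) = 3 * k & label (3 * k) = 3 * k + 1].
Proof. by move=> k_gt0; rewrite /label; split; case: ifP => /eqP; lia. Qed.

Definition one_differs (l t r b : int) : bool := (t != l) + (r != l) + (b != l) == 1.

Lemma locally_validE n (mu : assignment n) : locally_valid mu =
  [forall k : 'I_n, (0 < k) ==> one_differs (at_pos mu (3 * k - 4))
     (at_pos mu (3 * k - 2)) (at_pos mu (3 * k - 1)) (at_pos mu (3 * k))].
Proof.
apply: eq_forallb => k; case: (posnP k) => [//|k_gt0 /=].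
have lt_kn := ltn_ord k.
have lt_l : 3 * k - 4 < 3 * n - 2 by lia.
pose c0 : crease n := Ordinal lt_l.
have lab_c0 : lab c0 = 3 * k - 3 by have [] := label_vertex k_gt0.
have card_vertex : #|[set c : crease n | (lab c \in [:: 3 * k - 1; 3 * k; 3 * k + 1])
                                         && (mu c != mu c0)]| =
    (at_pos mu (3 * k - 2) != mu c0) + (at_pos mu (3 * k - 1) != mu c0)
    + (at_pos mu (3 * k) != mu c0).
  rewrite -(@card_ord_mem3 (3 * n - 2) (fun p => at_pos mu p != mu c0)); try lia.
  apply: eq_card => c; rewrite !inE at_posE; congr (_ && _).
  by rewrite /lab; case: ifP => /eqP; lia.
rewrite (at_posE mu c0).
apply/forallP/idP => [/(_ c0) | ok c]; first by rewrite lab_c0 eqxx card_vertex.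
apply/implyP => /eqP lab_c; suff -> : c = c0 by rewrite card_vertex.
by apply: val_inj; move: lab_c; rewrite /lab /=; case: ifP => /eqP; lia.
Qed.

Lemma locally_valid_vertex n (mu : assignment n) k : locally_valid mu -> 0 < k < n ->
  one_differs (at_pos mu (3 * k - 4)) (at_pos mu (3 * k - 2))
              (at_pos mu (3 * k - 1)) (at_pos mu (3 * k)).
Proof.
rewrite locally_validE => /forallP ok /andP[k_gt0 lt_kn].
exact: implyP (ok (Ordinal lt_kn)) k_gt0.
Qed.

Lemma borders_vertex n k (a : face n) : 0 < k < n ->
  let j := (val a.2).+1 in let upper := val a.1 == 0 in
  [/\ borders a (label (3 * k - 4)) = (j == k),
      borders a (label (3 * k - 2)) = upper && ((j == k) || (j == k.+1)),
      borders a (label (3 * k - 1)) = (j == k.+1)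
    & borders a (label (3 * k)) = ~~ upper && ((j == k) || (j == k.+1))].
Proof.
case: a => i j /andP[k_gt0 lt_kn] /=; have := ltn_ord j.
by rewrite /borders /label /=; case: ifP; split; case: ifP => /eqP ?; apply/idP/idP; lia.
Qed.

Lemma one_differs_forced (l t r b : int) : pm1 l -> pm1 t -> pm1 r -> pm1 b ->
  one_differs l t r b -> one_differs (- l)%R (- t)%R r b ->
  one_differs (- l)%R t r (- b)%R ->
  [/\ t = l, r = (- l)%R & b = l].
Proof. by do 4!case/orP=> /eqP->. Qed.

Lemma one_differs_flip (l : int) (upper x y : bool) : pm1 l -> ~~ (x && y) ->
  let fl (f : bool) v := if f then (- v)%R else v in
  one_differs (fl x l) (fl (upper && (x || y)) l)
              (fl y (- l)%R) (fl (~~ upper && (x || y)) l).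
Proof. by case/orP=> /eqP->; case: upper; case: x; case: y. Qed.

Definition forced_at n (mu : assignment n) k : Prop :=
  [/\ at_pos mu (3 * k - 2) = at_pos mu (3 * k - 4),
      at_pos mu (3 * k - 1) = (- at_pos mu (3 * k - 4))%R
    & at_pos mu (3 * k) = at_pos mu (3 * k - 4)].

Lemma flippable_forced n (mu : assignment n) k : is_MV mu -> (forall a, flippable mu a) ->
  0 < k < n -> forced_at mu k.
Proof.
move=> mu_MV all_flip k_range; have /andP[k_gt0 lt_kn] := k_range.
have lt_j : k.-1 < n by lia.
have [valid _] := andP (all_flip (ord0, Ordinal lt_j)).
have valid_flip i :=
  locally_valid_vertex (proj2 (andP (all_flip (i, Ordinal lt_j)))) k_range.
move: (valid_flip ord0) (valid_flip ord_max); rewrite !at_pos_flip.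
have [-> -> -> ->] := borders_vertex (ord0, Ordinal lt_j) k_range.
have [-> -> -> ->] := borders_vertex (ord_max, Ordinal lt_j) k_range.
rewrite /= prednK // eqxx (ltn_eqF (ltnSn k)) /= => flip_upper flip_lower.
by apply: one_differs_forced (locally_valid_vertex valid k_range) flip_upper flip_lower;
  apply: at_pos_MV; lia.
Qed.

Lemma forced_eq n (mu nu : assignment n) :
  (forall k, 0 < k < n -> forced_at mu k) -> (forall k, 0 < k < n -> forced_at nu k) ->
  at_pos mu 0 = at_pos nu 0 -> mu = nu.
Proof.
move=> mu_forced nu_forced eq0.
suff eq_upto k : k < n -> forall p, p <= 3 * k -> at_pos mu p = at_pos nu p.
  by apply/ffunP => c; rewrite -!at_posE; apply: (eq_upto n.-1); have := ltn_ord c; lia.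
elim: k => [_ p | k IHk lt_kn p le_p]; first by rewrite leqn0 => /eqP->.
have [le_p3k | lt_3k] := leqP p (3 * k); first by apply: IHk; lia.
have eq_left : at_pos mu (3 * k.+1 - 4) = at_pos nu (3 * k.+1 - 4) by apply: IHk; lia.
have [mu_t mu_r mu_b] := mu_forced k.+1 lt_kn.
have [nu_t nu_r nu_b] := nu_forced k.+1 lt_kn.
have : p = 3 * k.+1 - 2 \/ p = 3 * k.+1 - 1 \/ p = 3 * k.+1 by lia.
by case=> [|[|]] ->; rewrite ?(mu_t, mu_r, mu_b, nu_t, nu_r, nu_b) eq_left.
Qed.

Definition alternating n (s : int) : assignment n :=
  [ffun c => if odd (lab c) then (- s)%R else s].

Lemma at_pos_alternating n s p : p < 3 * n - 2 ->
  at_pos (alternating n s) p = if odd (label p) then (- s)%R else s.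
Proof. by move=> lt_p; rewrite -[p]/(val (Ordinal lt_p)) at_posE ffunE. Qed.

Lemma alternating_MV n s : pm1 s -> is_MV (alternating n s).
Proof.
by move=> s_pm1; apply/forallP => c; rewrite ffunE; case/orP: s_pm1 => /eqP->; case: ifP.
Qed.

Lemma alternating_forced n s k : 0 < k < n -> forced_at (alternating n s) k.
Proof.
move=> /andP[k_gt0 lt_kn]; rewrite /forced_at !at_pos_alternating; try lia.
have [-> -> -> ->] := label_vertex k_gt0.
set m := 3 * k - 3; have -> : 3 * k - 1 = m.+2 by rewrite /m; lia.
have -> : 3 * k + 1 = m.+4 by rewrite /m; lia.
have -> : 3 * k = m.+3 by rewrite /m; lia.
by rewrite /= !negbK; case: (odd m); rewrite ?opprK.
Qed.

Lemma alternating_valid n s : pm1 s -> locally_valid (alternating n s).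
Proof.
move=> s_pm1; rewrite locally_validE; apply/forallP => k; apply/implyP => k_gt0.
have k_range : 0 < k < n by rewrite k_gt0 ltn_ord.
have [-> -> ->] := alternating_forced s k_range.
have lt_l : 3 * k - 4 < 3 * n - 2 by have := ltn_ord k; lia.
by case/orP: (at_pos_MV (alternating_MV n s_pm1) lt_l) => /eqP->.
Qed.

Lemma alternating_flippable n s (a : face n) : pm1 s -> flippable (alternating n s) a.
Proof.
move=> s_pm1; rewrite /flippable alternating_valid //= locally_validE.
apply/forallP => k; apply/implyP => k_gt0.
have k_range : 0 < k < n by rewrite k_gt0 ltn_ord.
have lt_l : 3 * k - 4 < 3 * n - 2 by have := ltn_ord k; lia.
rewrite !at_pos_flip; have [-> -> ->] := alternating_forced s k_range.
have [-> -> -> ->] := borders_vertex a k_range.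
apply: one_differs_flip; first exact: at_pos_MV (alternating_MV n s_pm1) lt_l.
by apply/negP => /andP[/eqP-> /eqP]; lia.
Qed.

Lemma card_face n : #|{: face n}| = 2 * n.
Proof. by rewrite card_prod !card_ord. Qed.

Lemma nflip_le n (mu : assignment n) : nflip mu <= 2 * n.
Proof. by rewrite /nflip -card_face max_card. Qed.

Lemma nflip_maxP n (mu : assignment n) : nflip mu = 2 * n <-> forall a, flippable mu a.
Proof.
rewrite /nflip -card_face -cardsT; split => [card_max a | all_flip].
  have /eqP all : [set a | flippable mu a] == setT by rewrite eqEcard subsetT card_max /=.
  by have := in_setT a; rewrite -all inE.
by rewrite (_ : [set a | flippable mu a] = setT) //; apply/setP => a; rewrite !inE all_flip.
Qed.

Lemma alternating_max n s : pm1 s ->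
  [/\ is_MV (alternating n s), locally_valid (alternating n s)
    & nflip (alternating n s) = 2 * n].
Proof.
move=> s_pm1; split; [exact: alternating_MV | exact: alternating_valid |].
by apply/nflip_maxP => a; apply: alternating_flippable.
Qed.

Lemma nflip_max_alternating n (mu : assignment n) : is_MV mu -> nflip mu = 2 * n ->
  mu = alternating n (at_pos mu 0).
Proof.
move=> mu_MV /nflip_maxP all_flip; apply: forced_eq => [k|k|].
- exact: flippable_forced.
- exact: alternating_forced.
case: (posnP n) => [n0 | n_gt0]; first by rewrite /at_pos !insubN // n0.
by rewrite at_pos_alternating //; lia.
Qed.

Lemma restrict_alternating n s : restrict (alternating n s) = alternating (n - 1) s.
Proof. by apply/ffunP => c; rewrite !ffunE. Qed.

Lemma alternating_blue n s : 0 < n -> pm1 s -> blue (alternating n s).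
Proof.
move=> n_gt0 s_pm1; rewrite /blue restrict_alternating.
have [_ _ ->] := alternating_max n s_pm1; have [_ _ ->] := alternating_max (n - 1) s_pm1.
by case: eqP => // _; apply/eqP; lia.
Qed.

Theorem lemma4p6 (n : nat) (hn : 1 <= n) :
  (forall mu : assignment n, is_MV mu -> locally_valid mu -> nflip mu <= 2 * n) /\
  exists mu1 mu2 : assignment n,
    [/\ mu1 != mu2,
        [/\ is_MV mu1, locally_valid mu1 & nflip mu1 = 2 * n],
        [/\ is_MV mu2, locally_valid mu2 & nflip mu2 = 2 * n],
        (forall mu : assignment n, is_MV mu -> locally_valid mu ->
           nflip mu = 2 * n -> mu = mu1 \/ mu = mu2)
      & blue mu1 && blue mu2].
Proof.
have pm1_1 : pm1 1 by [].
have pm1_N1 : pm1 (-1) by [].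
have lt0 : 0 < 3 * n - 2 by lia.
split=> [mu _ _ | ]; first exact: nflip_le.
exists (alternating n 1), (alternating n (-1)); split.
- apply/eqP => /(congr1 (fun mu : assignment n => at_pos mu 0)).
  by rewrite !at_pos_alternating // => /eqP.
- exact: alternating_max.
- exact: alternating_max.
- move=> mu mu_MV _ /(nflip_max_alternating mu_MV) ->.
  by case/orP: (at_pos_MV mu_MV lt0) => /eqP->; [left | right].
- by rewrite !alternating_blue.
Qed.
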